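(* Let $X$ be a completely regular (Tychonoff) space and $C(X)$ the ring of real-valued continuous functions on $X$. The following are equivalent: (1) for any two ideals $A,B$ of $C(X)$ with $A\cap B=(0)$, $\mathrm{Ann}(A)+\mathrm{Ann}(B)=C(X)$; (2) $X$ is extremally disconnected.
   Context: $\mathrm{Ann}(A)=\{f\in C(X): fA=0\}$. A space $X$ is extremally disconnected if the closure of every open set is open. *)

From Stdlib Require Import Reals.
From Stdlib Require Export Rtopology.
Open Scope R_scope.

Record topology (X : Type) := {
  is_open : (X -> Prop) -> Prop;
  open_full : is_open (fun _ => True);
  open_empty : is_open (fun _ => False);
  open_union : forall (I : Type) (F : I -> X -> Prop),
      (forall i, is_open (F i)) -> is_open (fun x => exists i, F i x);
  open_inter : forall U V, is_open U -> is_open V ->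
      is_open (fun x => U x /\ V x);
  open_ext : forall U V, (forall x, U x <-> V x) -> is_open U -> is_open V
}.
Arguments is_open {X} t U.

Definition is_closed {X} (t : topology X) (F : X -> Prop) : Prop :=
  is_open t (fun x => ~ F x).

Definition closure {X} (t : topology X) (S : X -> Prop) : X -> Prop :=
  fun x => forall U, is_open t U -> U x -> exists y, U y /\ S y.

Definition continuous {X} (t : topology X) (f : X -> R) : Prop :=
  forall V : R -> Prop, open_set V -> is_open t (fun x => V (f x)).

Definition T1 {X} (t : topology X) : Prop :=
  forall a : X, is_closed t (fun x => x = a).

Definition completely_regular {X} (t : topology X) : Prop :=
  forall (F : X -> Prop) (x : X), is_closed t F -> ~ F x ->
    exists f : X -> R, continuous t f /\ f x = 0 /\ (forall y, F y -> f y = 1).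

Definition tychonoff {X} (t : topology X) : Prop :=
  T1 t /\ completely_regular t.

(* C(X): continuous real functions, ring operations pointwise.
   An ideal of C(X) is a predicate on functions X -> R contained in C(X). *)
Definition is_ideal {X} (t : topology X) (A : (X -> R) -> Prop) : Prop :=
  (forall f, A f -> continuous t f) /\
  A (fun _ => 0) /\
  (forall f g, A f -> A g -> A (fun x => f x + g x)) /\
  (forall f g, continuous t g -> A f -> A (fun x => g x * f x)).

Definition Ann {X} (t : topology X) (A : (X -> R) -> Prop) : (X -> R) -> Prop :=
  fun f => continuous t f /\ forall g, A g -> forall x, f x * g x = 0.

Definition trivial_meet {X} (A B : (X -> R) -> Prop) : Prop :=
  forall f, A f -> B f -> forall x, f x = 0.

Definition sum_is_whole {X} (t : topology X) (I J : (X -> R) -> Prop) : Prop :=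
  forall h, continuous t h ->
    exists f g, I f /\ J g /\ forall x, h x = f x + g x.

Definition extremally_disconnected {X} (t : topology X) : Prop :=
  forall U, is_open t U -> is_open t (closure t U).

(* The support [coz A] of an ideal A is the
   union of the cozero sets of its members; it is open.  The vanishing ideal
   [vanish_on S] consists of the continuous functions that are zero on S.

   (2) => (1).  Let C be the closure of coz A, clopen by hypothesis.  Every
   member of B vanishes on C (since b·a lies in A ∩ B = 0), so for any h the
   splitting h = h·1_{X∖C} + h·1_C writes h as an element of Ann(A) plus an
   element of Ann(B).
   (1) => (2).  For U open, apply (1) to A = vanish_on (X∖U) and
   B = vanish_on U and write 1 = f + g.  Complete regularity shows that an
   annihilator of vanish_on F vanishes off F (F closed), so f = 0 on U, hence
   on the closure of U, and g = 0 off the closure of U.  Therefore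
   closure U = {g > 1/2}, which is open. *)

From Stdlib Require Import Reals Lra Classical ClassicalEpsilon FunctionalExtensionality.
Open Scope R_scope.

Lemma open_local {X} (t : topology X) (S : X -> Prop) :
  (forall x, S x -> exists V, is_open t V /\ V x /\ forall y, V y -> S y) ->
  is_open t S.
Proof.
  intros H.
  set (I := {V : X -> Prop | is_open t V /\ forall y, V y -> S y}).
  apply (open_ext _ t (fun x => exists i : I, proj1_sig i x)).
  - intros x; split.
    + intros [[V [HV HVS]] Hx]; exact (HVS x Hx).
    + intros Hx. destruct (H x Hx) as [V [HV [HVx HVS]]].
      exists (exist _ V (conj HV HVS)); exact HVx.
  - apply (open_union _ t). intros i; exact (proj1 (proj2_sig i)).
Qed.

Lemma sub_closure {X} (t : topology X) (S : X -> Prop) x : S x -> closure t S x.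
Proof. intros Hx V _ HV; exists x; auto. Qed.

Lemma closure_closed {X} (t : topology X) S : is_closed t (closure t S).
Proof.
  apply open_local. intros x Hx.
  apply not_all_ex_not in Hx as [V HV].
  apply imply_to_and in HV as [HVopen HV].
  apply imply_to_and in HV as [HVx HVS].
  exists V; split; [exact HVopen | split; [exact HVx |]].
  intros y Hy Hcl. destruct (Hcl V HVopen Hy) as [z Hz].
  apply HVS; exists z; auto.
Qed.

Lemma open_disjoint_closure {X} (t : topology X) (S V : X -> Prop) :
  is_open t V -> (forall x, V x -> ~ S x) -> forall x, V x -> ~ closure t S x.
Proof.
  intros HV HVS x Vx Cx. destruct (Cx V HV Vx) as [y [Vy Sy]].
  exact (HVS y Vy Sy).
Qed.

Lemma open_compl_closed {X} (t : topology X) U :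
  is_open t U -> is_closed t (fun x => ~ U x).
Proof.
  intros HU. apply (open_ext _ t U); auto. intros; tauto.
Qed.

Lemma cont_ext {X} (t : topology X) f g :
  (forall x, f x = g x) -> continuous t f -> continuous t g.
Proof.
  intros E Hf V HV. apply (open_ext _ t (fun x => V (f x))).
  - intros x; rewrite E; tauto.
  - apply Hf; auto.
Qed.

Lemma cont_const {X} (t : topology X) c : continuous t (fun _ => c).
Proof.
  intros V _. destruct (classic (V c)).
  - apply (open_ext _ t (fun _ => True)); [intros; tauto | apply (open_full _ t)].
  - apply (open_ext _ t (fun _ => False)); [intros; tauto | apply (open_empty _ t)].
Qed.

Lemma cont_ball {X} (t : topology X) f (x : X) (d : R) :
  continuous t f -> 0 < d -> is_open t (fun y => Rabs (f y - f x) < d).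
Proof.
  intros Hf Hd. apply (Hf (disc (f x) (mkposreal d Hd))). apply disc_P1.
Qed.

Definition jointly_continuous (op : R -> R -> R) : Prop :=
  forall r1 r2 e, 0 < e -> exists d, 0 < d /\
    forall s1 s2, Rabs (s1 - r1) < d -> Rabs (s2 - r2) < d ->
      Rabs (op s1 s2 - op r1 r2) < e.

Lemma cont_binop {X} (t : topology X) (op : R -> R -> R) f g :
  jointly_continuous op -> continuous t f -> continuous t g ->
  continuous t (fun x => op (f x) (g x)).
Proof.
  intros Hop Hf Hg V HV. apply open_local. intros x Vx.
  destruct (HV _ Vx) as [[e He] Hball]; simpl in Hball.
  destruct (Hop (f x) (g x) e He) as [d [Hd Hnear]].
  exists (fun y => Rabs (f y - f x) < d /\ Rabs (g y - g x) < d).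
  split; [apply (open_inter _ t); apply cont_ball; auto|].
  split.
  - rewrite !Rminus_diag, Rabs_R0; lra.
  - intros y [Hfy Hgy]. apply Hball. exact (Hnear _ _ Hfy Hgy).
Qed.

Lemma Rplus_jointly_continuous : jointly_continuous Rplus.
Proof.
  intros r1 r2 e He. exists (e / 2); split; [lra|].
  intros s1 s2 H1 H2.
  replace (s1 + s2 - (r1 + r2)) with ((s1 - r1) + (s2 - r2)) by ring.
  pose proof (Rabs_triang (s1 - r1) (s2 - r2)); lra.
Qed.

Lemma Rmult_jointly_continuous : jointly_continuous Rmult.
Proof.
  intros r1 r2 e He.
  set (K := 1 + Rabs r1 + Rabs r2).
  assert (HK : 1 <= K) by (unfold K; pose proof (Rabs_pos r1); pose proof (Rabs_pos r2); lra).
  set (d := Rmin 1 (e / K)).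
  assert (Hd : 0 < d) by (apply Rmin_pos; [lra | apply Rdiv_lt_0_compat; lra]).
  assert (Hd1 : d <= 1) by apply Rmin_l.
  assert (HdK : d * K <= e).
  { assert (Hde : d <= e / K) by apply Rmin_r.
    apply (Rmult_le_compat_r K) in Hde; [|lra].
    unfold Rdiv in Hde; rewrite Rmult_assoc, Rinv_l, Rmult_1_r in Hde; lra. }
  exists d; split; [exact Hd|]. intros s1 s2 H1 H2.
  (* |s1 s2 - r1 r2| <= |a||b| + |a||r2| + |r1||b| with a = s1 - r1, b = s2 - r2 *)
  replace (s1 * s2 - r1 * r2)
    with ((s1 - r1) * (s2 - r2) + (s1 - r1) * r2 + r1 * (s2 - r2)) by ring.
  set (a := s1 - r1) in *. set (b := s2 - r2) in *.
  pose proof (Rabs_triang (a * b + a * r2) (r1 * b)).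
  pose proof (Rabs_triang (a * b) (a * r2)).
  rewrite !Rabs_mult in *.
  pose proof (Rabs_pos a); pose proof (Rabs_pos b).
  pose proof (Rabs_pos r1); pose proof (Rabs_pos r2).
  assert (Rabs a * Rabs b <= d * d) by (apply Rmult_le_compat; lra).
  assert (Rabs a * Rabs r2 <= d * Rabs r2) by (apply Rmult_le_compat_r; lra).
  assert (Rabs r1 * Rabs b <= Rabs r1 * d) by (apply Rmult_le_compat_l; lra).
  assert (d * d <= d) by nra.
  unfold K in HdK. nra.
Qed.

Lemma cont_plus {X} (t : topology X) f g :
  continuous t f -> continuous t g -> continuous t (fun x => f x + g x).
Proof. apply cont_binop, Rplus_jointly_continuous. Qed.

Lemma cont_mult {X} (t : topology X) f g :
  continuous t f -> continuous t g -> continuous t (fun x => f x * g x).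
Proof. apply cont_binop, Rmult_jointly_continuous. Qed.

Lemma cont_one_minus {X} (t : topology X) f :
  continuous t f -> continuous t (fun x => 1 - f x).
Proof.
  intros Hf. apply (cont_ext t (fun x => 1 + (-1) * f x)); [intros; ring|].
  apply cont_plus; [apply cont_const | apply cont_mult; auto; apply cont_const].
Qed.

Lemma open_cozero {X} (t : topology X) f :
  continuous t f -> is_open t (fun x => f x <> 0).
Proof.
  intros Hf. apply (Hf (fun r => r <> 0)). intros r Hr.
  assert (Hpos : 0 < Rabs r) by (apply Rabs_pos_lt; auto).
  exists (mkposreal _ Hpos). intros s Hs. unfold disc in Hs; simpl in Hs.
  intro E; subst s. rewrite Rminus_0_l, Rabs_Ropp in Hs; lra.
Qed.

Lemma open_superlevel {X} (t : topology X) f c :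
  continuous t f -> is_open t (fun x => c < f x).
Proof.
  intros Hf. apply (Hf (fun r => c < r)). intros r Hr.
  assert (Hpos : 0 < r - c) by lra.
  exists (mkposreal _ Hpos). intros s Hs. unfold disc in Hs; simpl in Hs.
  pose proof (Rabs_def2 _ _ Hs); lra.
Qed.

Lemma vanish_closure {X} (t : topology X) (S : X -> Prop) f :
  continuous t f -> (forall x, S x -> f x = 0) ->
  forall x, closure t S x -> f x = 0.
Proof.
  intros Hf HS x Cx. apply NNPP; intro Nx.
  refine (open_disjoint_closure t S (fun y => f y <> 0) (open_cozero t f Hf) _ x Nx Cx).
  intros y Hy Sy; exact (Hy (HS y Sy)).
Qed.

Definition indic {X} (C : X -> Prop) : X -> R :=
  fun x => if excluded_middle_informative (C x) then 1 else 0.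

Lemma indic_in {X} (C : X -> Prop) x : C x -> indic C x = 1.
Proof. unfold indic; destruct excluded_middle_informative; tauto. Qed.

Lemma indic_out {X} (C : X -> Prop) x : ~ C x -> indic C x = 0.
Proof. unfold indic; destruct excluded_middle_informative; tauto. Qed.

Lemma cont_indic {X} (t : topology X) C :
  is_open t C -> is_closed t C -> continuous t (indic C).
Proof.
  intros HC HnC V _.
  assert (Hval : forall x, indic C x = 1 /\ C x \/ indic C x = 0 /\ ~ C x).
  { intros x; destruct (classic (C x)); [left; rewrite indic_in | right; rewrite indic_out];
      auto. }
  destruct (classic (V 1)) as [v1|v1]; destruct (classic (V 0)) as [v0|v0].
  - apply (open_ext _ t (fun _ => True)); [|apply (open_full _ t)].
    intros x; destruct (Hval x) as [[-> _]|[-> _]]; tauto.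
  - apply (open_ext _ t C); [|auto].
    intros x; destruct (Hval x) as [[-> ?]|[-> ?]]; tauto.
  - apply (open_ext _ t (fun x => ~ C x)); [|auto].
    intros x; destruct (Hval x) as [[-> ?]|[-> ?]]; tauto.
  - apply (open_ext _ t (fun _ => False)); [|apply (open_empty _ t)].
    intros x; destruct (Hval x) as [[-> _]|[-> _]]; tauto.
Qed.

Definition coz {X} (A : (X -> R) -> Prop) : X -> Prop :=
  fun x => exists a, A a /\ a x <> 0.

Lemma coz_open {X} (t : topology X) A : is_ideal t A -> is_open t (coz A).
Proof.
  intros [HA _]. apply open_local. intros x [a [Ha Hax]].
  exists (fun y => a y <> 0). repeat split; auto.
  - exact (open_cozero t a (HA a Ha)).
  - intros y Hy; exists a; auto.
Qed.

Lemma ann_of_vanish_coz {X} (t : topology X) A f :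
  continuous t f -> (forall x, coz A x -> f x = 0) -> Ann t A f.
Proof.
  intros Hf Hz. split; auto. intros a Ha x.
  destruct (classic (a x = 0)) as [E|N].
  - rewrite E; ring.
  - rewrite (Hz x) by (exists a; auto). ring.
Qed.

Lemma disjoint_ideal_vanishes {X} (t : topology X) A B :
  is_ideal t A -> is_ideal t B -> trivial_meet A B ->
  forall b, B b -> forall x, closure t (coz A) x -> b x = 0.
Proof.
  intros [HA1 [_ [_ HA4]]] [HB1 [_ [_ HB4]]] Hmeet b Hb.
  apply (vanish_closure t _ b (HB1 b Hb)).
  intros x [a [Ha Hax]].
  assert (HbaA : A (fun z => b z * a z)) by (apply HA4; auto).
  assert (HbaB : B (fun z => b z * a z)).
  { replace (fun z => b z * a z) with (fun z => a z * b z)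
      by (apply functional_extensionality; intros; ring).
    apply HB4; auto. }
  pose proof (Hmeet _ HbaA HbaB x) as Hprod; simpl in Hprod.
  apply Rmult_integral in Hprod; tauto.
Qed.

Lemma annihilator_sum_of_ED {X} (t : topology X) :
  extremally_disconnected t ->
  forall A B : (X -> R) -> Prop, is_ideal t A -> is_ideal t B ->
    trivial_meet A B -> sum_is_whole t (Ann t A) (Ann t B).
Proof.
  intros ED A B IA IB Hmeet h Hh.
  set (C := closure t (coz A)).
  assert (HC : is_open t C) by (apply ED, coz_open, IA).
  assert (HCc : is_closed t C) by apply closure_closed.
  assert (HnC : is_open t (fun x => ~ C x)) by exact HCc.
  assert (HnCc : is_closed t (fun x => ~ C x)) by (apply open_compl_closed; auto).
  exists (fun x => h x * indic (fun y => ~ C y) x), (fun x => h x * indic C x).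
  split; [|split].
  - apply ann_of_vanish_coz; [apply cont_mult, cont_indic; auto|].
    intros x Ax. rewrite indic_out; [ring|]. intros N; apply N, sub_closure, Ax.
  - split; [apply cont_mult, cont_indic; auto|].
    intros b Hb x. destruct (classic (C x)) as [Cx|Cx].
    + rewrite (disjoint_ideal_vanishes t A B IA IB Hmeet b Hb x Cx); ring.
    + rewrite indic_out by auto; ring.
  - intros x. destruct (classic (C x)) as [Cx|Cx].
    + rewrite (indic_in C x), (indic_out (fun y => ~ C y) x) by tauto; ring.
    + rewrite (indic_out C x), (indic_in (fun y => ~ C y) x) by auto; ring.
Qed.

Definition vanish_on {X} (t : topology X) (S : X -> Prop) : (X -> R) -> Prop :=
  fun f => continuous t f /\ forall x, S x -> f x = 0.

Lemma vanish_on_ideal {X} (t : topology X) S : is_ideal t (vanish_on t S).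
Proof.
  split; [|split; [|split]].
  - intros f [Hf _]; auto.
  - split; [apply cont_const | reflexivity].
  - intros f g [Hf Hf0] [Hg Hg0]; split; [apply cont_plus; auto|].
    intros x Sx; rewrite Hf0, Hg0; auto; ring.
  - intros f g Hg [Hf Hf0]; split; [apply cont_mult; auto|].
    intros x Sx; rewrite Hf0; auto; ring.
Qed.

Lemma ann_vanish_on_closed {X} (t : topology X) (F : X -> Prop) f :
  completely_regular t -> is_closed t F ->
  Ann t (vanish_on t F) f -> forall x, ~ F x -> f x = 0.
Proof.
  intros CR HF [_ Hf] x Fx.
  destruct (CR F x HF Fx) as [phi [Hphi [Hphix HphiF]]].
  assert (Hbump : vanish_on t F (fun y => 1 - phi y)).
  { split; [apply cont_one_minus; auto|]. intros y Fy; rewrite HphiF; auto; ring. }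
  pose proof (Hf _ Hbump x) as Hprod; simpl in Hprod.
  rewrite Hphix in Hprod; lra.
Qed.

Lemma ED_of_annihilator_sum {X} (t : topology X) :
  completely_regular t ->
  (forall A B : (X -> R) -> Prop, is_ideal t A -> is_ideal t B ->
     trivial_meet A B -> sum_is_whole t (Ann t A) (Ann t B)) ->
  extremally_disconnected t.
Proof.
  intros CR Hsum U HU.
  set (A := vanish_on t (fun x => ~ U x)).
  set (B := vanish_on t U).
  assert (Hmeet : trivial_meet A B).
  { intros f [_ HfA] [_ HfB] x. destruct (classic (U x)); auto. }
  destruct (Hsum A B (vanish_on_ideal t _) (vanish_on_ideal t _) Hmeet
              (fun _ => 1) (cont_const t 1)) as [f [g [HfA [HgB Hsplit]]]].
  assert (fU : forall x, U x -> f x = 0).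
  { intros x Ux. apply (ann_vanish_on_closed t _ f CR (open_compl_closed t U HU) HfA).
    tauto. }
  assert (fC : forall x, closure t U x -> f x = 0)
    by (apply vanish_closure; [exact (proj1 HfA) | exact fU]).
  assert (gC : forall x, ~ closure t U x -> g x = 0).
  { apply (ann_vanish_on_closed t _ g CR (closure_closed t U)).
    split; [exact (proj1 HgB)|]. intros a [Ha Ha0].
    apply (proj2 HgB). split; auto. intros x Ux; apply Ha0, sub_closure, Ux. }
  apply (open_ext _ t (fun x => 1/2 < g x)); [|apply open_superlevel, (proj1 HgB)].
  intros x; split.
  - intros Hx. apply NNPP; intro N. rewrite gC in Hx; auto; lra.
  - intros Hx. pose proof (Hsplit x) as E. rewrite fC in E; auto. lra.
Qed.

Theorem theorem2p5 (X : Type) (t : topology X) (hX : tychonoff t) :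
  (forall A B : (X -> R) -> Prop, is_ideal t A -> is_ideal t B ->
     trivial_meet A B -> sum_is_whole t (Ann t A) (Ann t B))
  <-> extremally_disconnected t.
Proof.
  destruct hX as [_ CR].
  split.
  - exact (ED_of_annihilator_sum t CR).
  - exact (annihilator_sum_of_ED t).
Qed.
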